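(* Let $R$ be a commutative Bézout ring such that for every $a\in R\setminus J(R)$ the set $Z(a)$ of maximal ideals of $R$ containing $a$ is finite. Then $R$ is strongly completable: for every $n\ge 2$ and all $a_1,\dots,a_n,d\in R$ with $a_1R+\cdots+a_nR=dR$, there is an $n\times n$ matrix over $R$ with first row $(a_1,\dots,a_n)$ and determinant $d$.
   Context: All rings are commutative with identity; $J(R)$ denotes the Jacobson radical. A ring is Bézout if every finitely generated ideal is principal. *)

From mathcomp Require Import all_boot all_order all_algebra.
Set Implicit Arguments. Unset Strict Implicit. Unset Printing Implicit Defensive.
Import GRing.Theory.
Local Open Scope ring_scope.

Definition is_ideal (R : comPzRingType) (I : R -> Prop) : Prop :=
  [/\ I 0, (forall x y, I x -> I y -> I (x + y)) &
      (forall r x, I x -> I (r * x))].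

Definition is_maximal_ideal (R : comPzRingType) (M : R -> Prop) : Prop :=
  [/\ is_ideal M, ~ M 1 &
      (forall I : R -> Prop, is_ideal I -> (forall x, M x -> I x) ->
         (forall x, I x <-> M x) \/ (forall x, I x))].

Definition jacobson (R : comPzRingType) (x : R) : Prop :=
  forall M : R -> Prop, is_maximal_ideal M -> M x.

Definition finite_Z (R : comPzRingType) (a : R) : Prop :=
  exists (k : nat) (f : nat -> R -> Prop),
    forall M : R -> Prop, is_maximal_ideal M -> M a ->
      exists2 i, (i < k)%N & forall x, M x <-> f i x.

Definition in_gen_ideal (R : comPzRingType) (n : nat) (a : 'I_n -> R) (x : R)
  : Prop := exists c : 'I_n -> R, x = \sum_(i < n) a i * c i.

Definition bezout_ring (R : comPzRingType) : Prop :=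
  forall (n : nat) (a : 'I_n -> R), exists d : R,
    forall x, in_gen_ideal a x <-> exists r, x = d * r.

Definition strongly_completable (R : comPzRingType) : Prop :=
  forall (n : nat) (a : 'I_n.+2 -> R) (d : R),
    (forall x, in_gen_ideal a x <-> exists r, x = d * r) ->
    exists A : 'M[R]_n.+2, (forall j, A ord0 j = a j) /\ \det A = d.

(* If x = g x', y = g y' and g = x s + y t, then (x', y', c) with c = 1 - x' s - y' t
   is unimodular and g c = 0.  Avoiding, one at a time, the finitely many maximal ideals
   containing y' (or x', whichever is outside J(R)), some translate x' + c r becomes
   comaximal to y'; if both lie in J(R), c is a unit.  Translating by multiples of c does
   not change g x' and g y', so every row factors as g b with b unimodular.  Then
   a = (a_0, g b) is completed with determinant sum_i a_i c_i by the product of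
   [[a_0, g], [-t, c_0]] (+) I and 1 (+) B, where B completes b with determinant 1 and
   t = sum_j b_j c_(j+1). *)

From mathcomp Require Import all_boot all_order all_algebra.
From mathcomp Require Import ring.
From mathcomp Require Import boolp classical_sets.
Set Implicit Arguments. Unset Strict Implicit. Unset Printing Implicit Defensive.
Import GRing.Theory.
Local Open Scope ring_scope.

Section Ideals.
Variable R : comPzRingType.
Implicit Types (I J M N : R -> Prop) (x y r : R).

Lemma ideal0 I : is_ideal I -> I 0.
Proof. by case. Qed.

Lemma idealD I x y : is_ideal I -> I x -> I y -> I (x + y).
Proof. by case=> _ + _; apply. Qed.

Lemma idealMl I r x : is_ideal I -> I x -> I (r * x).
Proof. by case=> _ _; apply. Qed.

Lemma idealMr I x r : is_ideal I -> I x -> I (x * r).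
Proof. by rewrite mulrC; apply: idealMl. Qed.

Lemma idealB I x y : is_ideal I -> I x -> I y -> I (x - y).
Proof. by move=> iI Ix Iy; apply: idealD => //; rewrite -mulN1r; apply: idealMl. Qed.

Lemma ideal1 I x : is_ideal I -> I 1 -> I x.
Proof. by move=> iI I1; rewrite -[x]mulr1; apply: idealMl. Qed.

Definition proper_ideal_over I J := [/\ is_ideal J, ~ J 1 & forall x, I x -> J x].

Lemma bigcup_chain_proper_ideal_over I (F : set (set R)) X0 :
  (F `<=` proper_ideal_over I)%classic -> total_on F subset -> F X0 ->
  proper_ideal_over I (\bigcup_(X in F) X)%classic.
Proof.
move=> FP Ftot FX0; have [iX0 _ IX0] := FP X0 FX0; split.
- split; first by exists X0 => //; exact: ideal0 iX0.
  + move=> x y [X FX Xx] [Y FY Yy]; have [iX _ _] := FP X FX; have [iY _ _] := FP Y FY.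
    have [XY|YX] := Ftot X Y FX FY.
    * by exists Y => //; apply: idealD => //; apply: XY.
    * by exists X => //; apply: idealD => //; apply: YX.
  + move=> r x [X FX Xx]; have [iX _ _] := FP X FX.
    by exists X => //; apply: idealMl.
- by move=> [X FX X1]; have [_ nX1 _] := FP X FX.
- by move=> x Ix; exists X0 => //; apply: IX0.
Qed.

Lemma exists_maximal_ideal I : is_ideal I -> ~ I 1 ->
  exists2 M, is_maximal_ideal M & forall x, I x -> M x.
Proof.
move=> iI nI1.
(* [set0] is admitted so that the empty chain has an upper bound. *)
pose P X := X = set0 \/ proper_ideal_over I X.
have chainP (F : set (set R)) : (F `<=` P)%classic -> total_on F subset ->
    P (\bigcup_(X in F) X)%classic.
  move=> FP Ftot.
  have [[X0 FX0 pX0]|noP] := pselect (exists2 X, F X & proper_ideal_over I X).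
    right; have -> : (\bigcup_(X in F) X = \bigcup_(X in F `&` proper_ideal_over I) X)%classic.
      apply/seteqP; split=> x [X FX Xx]; exists X => //; last by case: FX.
      by split=> //; case: (FP X FX) => // eX; rewrite eX in Xx.
    apply: (@bigcup_chain_proper_ideal_over _ _ X0) => //.
    by move=> X Y [FX _] [FY _]; apply: Ftot.
  left; apply/seteqP; split=> x // [X FX Xx].
  by case: (FP X FX) => [eX|pX]; [rewrite eX in Xx|case: noP; exists X].
have [A [[A0|[iA nA1 IA]] Amax]] := Zorn_bigcup chainP.
  exfalso; apply: (Amax I); last by right.
  by rewrite A0; split=> // IA; have := IA 0 (ideal0 iI).
exists A => //; split=> // J iJ AJ.
have [J1|nJ1] := pselect (J 1); first by right=> x; apply: ideal1.
left=> x; split=> [Jx|]; last exact: AJ.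
have [//|nAx] := pselect (A x).
exfalso; apply: (Amax J); last by right; split=> // y /IA /AJ.
by split=> [y /AJ //|JA]; apply/nAx/(JA x Jx).
Qed.

Lemma maximal_ideal_prime M x y : is_maximal_ideal M -> M (x * y) -> ~ M x -> M y.
Proof.
move=> [iM _ maxM] Mxy nMx.
pose J z := exists m w, M m /\ z = m + x * w.
have iJ : is_ideal J.
  split; first by exists 0, 0; rewrite mulr0 addr0; split=> //; apply: ideal0.
  - move=> _ _ [m [w [Mm ->]]] [m' [w' [Mm' ->]]].
    by exists (m + m'), (w + w'); split; [apply: idealD|ring].
  - move=> r _ [m [w [Mm ->]]].
    by exists (r * m), (r * w); split; [apply: idealMl|ring].
have MJ z : M z -> J z by exists z, 0; rewrite mulr0 addr0.
case: (maxM J iJ MJ) => [JM|J1].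
  by case: nMx; apply/JM; exists 0, 1; rewrite mulr1 add0r; split=> //; apply: ideal0.
have [m [w [Mm e1]]] := J1 1.
have -> : y = y * m + w * (x * y) by rewrite -[y in LHS]mulr1 e1; ring.
by apply: idealD => //; apply: idealMl.
Qed.

Lemma maximal_ideal_neq M N : is_maximal_ideal M -> is_maximal_ideal N -> M <> N ->
  exists2 w, M w & ~ N w.
Proof.
move=> [_ _ maxM] [iN nN1 _] neMN.
have [[w Mw nNw]|noMN] := pselect (exists2 w, M w & ~ N w); first by exists w.
have MN z : M z -> N z by move=> Mz; apply: contra_notP noMN => nNz; exists z.
case: (maxM N iN MN) => [NM|N1]; last by case: nN1; apply: N1.
by case: neMN; apply/funext => z; apply/propext; split=> [/MN|/NM].
Qed.

Definition comaximal x y := exists p q, x * p + y * q = 1.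

Lemma comaximal_sym x y : comaximal x y -> comaximal y x.
Proof. by move=> [p [q e]]; exists q, p; rewrite addrC. Qed.

Lemma comaximal_of_maximal x y :
  (forall M, is_maximal_ideal M -> M x -> M y -> False) -> comaximal x y.
Proof.
move=> noM; have [//|ncomax] := pselect (comaximal x y); exfalso.
pose J z := exists p q, z = x * p + y * q.
have iJ : is_ideal J.
  split; first by exists 0, 0; ring.
  - by move=> _ _ [p [q ->]] [p' [q' ->]]; exists (p + p'), (q + q'); ring.
  - by move=> r _ [p [q ->]]; exists (r * p), (r * q); ring.
have nJ1 : ~ J 1 by move=> [p [q e]]; apply: ncomax; exists p, q.
have [M maxM JM] := exists_maximal_ideal iJ nJ1.
by apply: (noM M maxM); apply: JM; [exists 1, 0|exists 0, 1]; ring.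
Qed.

Lemma maximal_ideals_separate M0 k (f : nat -> R -> Prop) (Q : nat -> Prop) :
  is_maximal_ideal M0 ->
  (forall i, (i < k)%N -> Q i -> is_maximal_ideal (f i) /\ f i <> M0) ->
  exists2 z, ~ M0 z & forall i, (i < k)%N -> Q i -> f i z.
Proof.
move=> maxM0; elim: k => [|k IH] hf.
  by exists 1 => [|i]; [case: maxM0|rewrite ltn0].
have [z nM0z fz] : exists2 z, ~ M0 z & forall i, (i < k)%N -> Q i -> f i z.
  by apply: IH => i lt_ik; apply: hf; apply: ltnW.
have [Qk|nQk] := pselect (Q k); last first.
  by exists z => // i; rewrite ltnS leq_eqVlt => /orP[/eqP->|/fz].
have [maxfk neq_fkM0] := hf k (ltnSn k) Qk.
have [w fkw nM0w] := maximal_ideal_neq maxfk maxM0 neq_fkM0.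
exists (z * w) => [/(maximal_ideal_prime maxM0)/(_ nM0z)//|i].
rewrite ltnS leq_eqVlt => /orP[/eqP-> _|lt_ik Qi].
  by apply: idealMl => //; case: maxfk.
have [[ifi _ _] _] := hf i (ltnW lt_ik) Qi.
by apply: idealMr => //; apply: fz.
Qed.

Lemma exists_translate_avoiding k (f : nat -> R -> Prop) (Q : nat -> Prop) x c :
  (forall i, (i < k)%N -> Q i -> is_maximal_ideal (f i) /\ ~ (f i x /\ f i c)) ->
  exists r, forall i, (i < k)%N -> Q i -> ~ f i (x + c * r).
Proof.
elim: k => [|k IH] hf; first by exists 0 => i; rewrite ltn0.
have [r0 avoid0] : exists r, forall i, (i < k)%N -> Q i -> ~ f i (x + c * r).
  by apply: IH => i lt_ik; apply: hf; apply: ltnW.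
have [[Qk fk_r0]|r0_avoids_fk] := pselect (Q k /\ f k (x + c * r0)); last first.
  exists r0 => i; rewrite ltnS leq_eqVlt => /orP[/eqP-> Qk fk|/avoid0//].
  by apply: r0_avoids_fk.
have [maxfk nfkxc] := hf k (ltnSn k) Qk; have [ifk _ _] := maxfk.
have [z nfkz fz] : exists2 z, ~ f k z & forall i, (i < k)%N -> Q i -> f i z.
  apply: maximal_ideals_separate => // i lt_ik Qi.
  split; first by case: (hf i (ltnW lt_ik) Qi).
  by move=> fik; apply: (avoid0 i lt_ik Qi); rewrite fik.
have nfkc : ~ f k c.
  move=> fkc; apply: nfkxc; split=> //.
  rewrite -(addrK (c * r0) x); apply: idealB => //; exact: idealMr.
exists (r0 + z) => i; rewrite ltnS leq_eqVlt => /orP[/eqP-> _ fk_rz|lt_ik Qi fi_rz].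
  suff fkcz : f k (c * z) by apply/nfkz/(maximal_ideal_prime maxfk fkcz nfkc).
  have -> : c * z = (x + c * (r0 + z)) - (x + c * r0) by ring.
  exact: idealB.
have [[ifi _ _] _] := hf i (ltnW lt_ik) Qi.
apply: (avoid0 i lt_ik Qi).
have -> : x + c * r0 = (x + c * (r0 + z)) - c * z by ring.
by apply: idealB => //; apply: idealMl => //; apply: fz.
Qed.

End Ideals.

Section FiniteMaximalSpectrum.
Variable R : comPzRingType.
Hypothesis finZ : forall a : R, ~ jacobson a -> finite_Z a.

Lemma comaximal_translate (x y c : R) : ~ jacobson y ->
  (forall M, is_maximal_ideal M -> M x -> M y -> M c -> False) ->
  exists r, comaximal (x + c * r) y.
Proof.
move=> njy noM; have [k [f Zy]] := finZ njy.
pose Q i := is_maximal_ideal (f i) /\ f i y.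
have [r avoid] : exists r, forall i, (i < k)%N -> Q i -> ~ f i (x + c * r).
  apply: exists_translate_avoiding => i _ [maxfi fiy]; split=> // -[fx fc].
  exact: noM maxfi fx fiy fc.
exists r; apply: comaximal_of_maximal => M maxM Mxcr My.
have [i lt_ik eMfi] := Zy M maxM My.
have eM : M = f i by apply/funext => z; apply/propext.
by rewrite eM in maxM My Mxcr; apply: (avoid i lt_ik).
Qed.

Lemma unimodular_triple_reduce (x y c : R) :
  (forall M, is_maximal_ideal M -> M x -> M y -> M c -> False) ->
  exists r1 r2, comaximal (x + c * r1) (y + c * r2).
Proof.
move=> noM; have [jy|njy] := pselect (jacobson y); last first.
  by have [r cr] := comaximal_translate njy noM; exists r, 0; rewrite mulr0 addr0.
have [jx|njx] := pselect (jacobson x); last first.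
  have [r cr] := comaximal_translate (c := c) njx (fun M maxM My Mx => noM M maxM Mx My).
  by exists 0, r; rewrite mulr0 addr0; apply: comaximal_sym.
have [p [q cpq]] : comaximal c c.
  apply: comaximal_of_maximal => M maxM Mc _.
  by apply: (noM M maxM) => //; [apply: jx|apply: jy].
exists ((p + q) * (1 - x)), 0, 1, 0.
have -> : c * ((p + q) * (1 - x)) = (c * p + c * q) * (1 - x) by ring.
by rewrite cpq; ring.
Qed.

End FiniteMaximalSpectrum.

Lemma bezout_pair (R : comPzRingType) : bezout_ring R ->
  forall x y : R, exists g x' y' s t, [/\ x = g * x', y = g * y' & g = x * s + y * t].
Proof.
move=> bezR x y; pose a (i : 'I_2) := if i == ord0 then x else y.
have [g idealg] := bezR 2 a.
have [x' ex] : exists r, x = g * r.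
  by apply/idealg; exists (fun i => (i == ord0)%:R); rewrite !big_ord_recl big_ord0 /a /=; ring.
have [y' ey] : exists r, y = g * r.
  by apply/idealg; exists (fun i => (i != ord0)%:R); rewrite !big_ord_recl big_ord0 /a /=; ring.
have [st est] : in_gen_ideal a g by apply/idealg; exists 1; rewrite mulr1.
exists g, x', y', (st ord0), (st (lift ord0 ord0)); split=> //.
by rewrite est !big_ord_recl big_ord0 addr0.
Qed.

Lemma hermite_pair (R : comPzRingType) : bezout_ring R ->
  (forall a : R, ~ jacobson a -> finite_Z a) ->
  forall x y : R, exists h x1 y1, [/\ x = h * x1, y = h * y1 & comaximal x1 y1].
Proof.
move=> bezR finZ x y; have [g [x' [y' [s [t [ex ey eg]]]]]] := bezout_pair bezR x y.
pose c := 1 - x' * s - y' * t.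
have gc0 : g * c = 0.
  by rewrite /c !mulrBr mulr1 !mulrA -ex -ey {1}eg; ring.
have [r1 [r2 cr]] : exists r1 r2, comaximal (x' + c * r1) (y' + c * r2).
  apply: unimodular_triple_reduce => // M [iM nM1 _] Mx My Mc; apply: nM1.
  have -> : 1 = x' * s + y' * t + c by rewrite /c; ring.
  by apply: idealD => //; apply: idealD => //; apply: idealMr.
by exists g, (x' + c * r1), (y' + c * r2); rewrite !mulrDr !mulrA gc0 !mul0r !addr0.
Qed.

Section Completion.
Variable R : comPzRingType.

Definition block2_mx m (a b c d : R) : 'M[R]_m.+2 :=
  \matrix_(i, j) match nat_of_ord i, nat_of_ord j with
    | 0, 0 => a | 0, 1 => b | 1, 0 => c | 1, 1 => d
    | 0, _ | 1, _ => 0 | _, _ => (i == j)%:R end.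

Lemma det_block2_mx m (a b c d : R) : \det (block2_mx m a b c d) = a * d - b * c.
Proof.
rewrite (expand_det_row _ ord0) !big_ord_recl big1 => [|j _]; last first.
  by rewrite mxE /= mul0r.
rewrite !mxE /= /cofactor.
have -> : row' ord0 (col' ord0 (block2_mx m a b c d)) =
    diag_mx (\row_(j < m.+1) if j == 0 :> nat then d else 1).
  apply/matrixP=> i j; rewrite !mxE /= -val_eqE /=.
  by case: i => [[|i] ?]; case: j => [[|j] ?]; rewrite //= ?mulr1n ?mulr0n.
have -> : row' ord0 (col' (lift ord0 ord0) (block2_mx m a b c d)) =
    diag_mx (\row_(j < m.+1) if j == 0 :> nat then c else 1).
  apply/matrixP=> i j; rewrite !mxE /= -val_eqE /=.
  by case: i => [[|i] ?]; case: j => [[|j] ?]; rewrite //= ?mulr1n ?mulr0n.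
rewrite !det_diag !big_ord_recl !big1 => [|j _|j _]; rewrite ?mxE //=.
by rewrite /bump /= expr0 expr1; ring.
Qed.

(* Stated at size [n.+1] rather than [1 + n] so that it rewrites entries of products of
   square matrices. *)
Lemma lift0_mxE n (B : 'M[R]_n) i j :
  (lift0_mx B : 'M_n.+1) i j = match unlift ord0 i, unlift ord0 j with
                   | Some i', Some j' => B i' j' | None, None => 1 | _, _ => 0 end.
Proof.
have ord0E : ord0 = lshift n (ord0 : 'I_1) by apply: val_inj.
have liftE k : lift ord0 k = rshift 1 k by apply: val_inj.
case: (unliftP ord0 i) => [i'|] ->; case: (unliftP ord0 j) => [j'|] ->;
  rewrite ?liftK ?unlift_none ?liftE ?ord0E.
- exact: block_mxEdr.
- by transitivity ((0 : 'M[R]_(n, 1)) i' ord0); [exact: block_mxEdl|rewrite mxE].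
- by transitivity ((0 : 'M[R]_(1, n)) ord0 j'); [exact: block_mxEur|rewrite mxE].
- by transitivity ((1 : 'M[R]_1) ord0 ord0); [exact: block_mxEul|rewrite mxE].
Qed.

Lemma det_lift0_mx n (B : 'M[R]_n) : \det (lift0_mx B) = \det B.
Proof. by rewrite det_ublock det1 mul1r. Qed.

Hypothesis hermite : forall x y : R,
  exists h x1 y1, [/\ x = h * x1, y = h * y1 & comaximal x1 y1].

Lemma row_factor_unimodular m (a : 'I_m.+1 -> R) :
  exists g (b s : 'I_m.+1 -> R), (forall i, a i = g * b i) /\ \sum_i b i * s i = 1.
Proof.
elim: m a => [|m IH] a.
  exists (a ord0), (fun _ => 1), (fun _ => 1).
  by split=> [i|]; rewrite ?big_ord1 mulr1 // (ord1 i).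
have [g [b [s [eb es]]]] := IH (fun i => a (lift ord0 i)).
have [h [x1 [y1 [ex ey [p [q exy]]]]]] := hermite (a ord0) g.
exists h, (fun i => if unlift ord0 i is Some j then y1 * b j else x1),
  (fun i => if unlift ord0 i is Some j then q * s j else p); split.
  by move=> i; case: (unliftP ord0 i) => [j|] ->; rewrite ?liftK ?eb ?ey ?mulrA.
rewrite big_ord_recl unlift_none.
under eq_bigr => j _ do rewrite liftK mulrACA.
by rewrite -mulr_sumr es mulr1.
Qed.

Lemma row_completion m (a c : 'I_m.+2 -> R) :
  exists A : 'M[R]_m.+2, (forall j, A ord0 j = a j) /\ \det A = \sum_i a i * c i.
Proof.
elim: m a c => [|m IH] a c.
  exists (block2_mx 0 (a ord0) (a (lift ord0 ord0)) (- c (lift ord0 ord0)) (c ord0)).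
  split; last by rewrite det_block2_mx !big_ord_recl big_ord0; ring.
  by move=> j; rewrite mxE; case: j => [[|[|j]] ?] //=; congr a; apply: val_inj.
have [g [b [s [eb es]]]] := row_factor_unimodular (fun i => a (lift ord0 i)).
have [B [rowB detB]] := IH b s.
pose t := \sum_j b j * c (lift ord0 j).
exists (block2_mx m.+1 (a ord0) g (- t) (c ord0) *m lift0_mx B); split.
  move=> j; rewrite mxE !big_ord_recl big1 => [|k _]; last by rewrite mxE /= mul0r.
  rewrite !lift0_mxE !mxE unlift_none liftK /=.
  by case: (unliftP ord0 j) => [j'|] ->; rewrite ?liftK ?rowB ?eb; ring.
rewrite det_mulmx det_block2_mx det_lift0_mx detB es big_ord_recl mulr1.
rewrite mulrN opprK /t mulr_sumr; congr (_ + _); apply: eq_bigr => j _.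
by rewrite eb mulrA.
Qed.

End Completion.

Theorem proposition4p7 (R : comPzRingType) :
  bezout_ring R ->
  (forall a : R, ~ jacobson a -> finite_Z a) ->
  strongly_completable R.
Proof.
move=> bezR finZ n a d ideal_d.
have [c ->] : in_gen_ideal a d by apply/ideal_d; exists 1; rewrite mulr1.
by have [A ?] := row_completion (hermite_pair bezR finZ) a c; exists A.
Qed.
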